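(* Let $L$ be a precompact Hausdorff co-Heyting algebra. Then the set $\mathcal I^{!\vee}(L)$ of completely join irreducible elements and the set $\mathcal I^{!\wedge}(L)$ of completely meet irreducible elements generate the same co-Heyting subalgebra of $L$ (substructure for $0,1,\vee,\wedge,-$), and this subalgebra is the smallest co-Heyting subalgebra of $L$ that is dense in $L$ for the codimetric topology.
   Context: A co-Heyting algebra is a bounded distributive lattice $(L,0,1,\vee,\wedge)$ such that $a-b=\min\{c\in L: a\le b\vee c\}$ exists for all $a,b$. Let $a\triangle b=(a-b)\vee(b-a)$; for an ideal $I$, $L/I$ is the quotient by $a\equiv_I b\iff a\triangle b\in I$. $\operatorname{Spec}L$ is the set of prime filters ordered by inclusion; height = foundation rank there; $\operatorname{codim}_La=\min\{\operatorname{height}\mathfrak p: a\in\mathfrak p\}$ ($+\infty$ if none); $dL=\{a:\operatorname{codim}_La\ge d\}$. The codimetric pseudometric is $\operatorname{dist}_L(a,b)=2^{-\operatorname{codim}_L(a\triangle b)}$ if finite, $0$ otherwise; the codimetric topology is the one it defines. $L$ is Hausdorff if every nonzero element has finite codimension; precompact if $L/dL$ is finite for every positive integer $d$. $x\ne0$ is completely join irreducible if $x\le\bigvee A$ implies $x\le a$ for some $a\in A$; $x\ne1$ is completely meet irreducible if $\bigwedge A\le x$ implies $a\le x$ for some $a\in A$. *)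

From Stdlib Require Import List.
Set Implicit Arguments.

(** Co-Heyting algebra: bounded distributive lattice with a difference
    a - b = min {c | a <= b \/ c}, axiomatised by the Galois law
    a <= b \/ c  <->  a - b <= c. *)
Record coHeyting := CoHeyting {
  carrier :> Type;
  bot : carrier;
  top : carrier;
  join : carrier -> carrier -> carrier;
  meet : carrier -> carrier -> carrier;
  sub : carrier -> carrier -> carrier;
  joinC : forall a b, join a b = join b a;
  joinA : forall a b c, join a (join b c) = join (join a b) c;
  meetC : forall a b, meet a b = meet b a;
  meetA : forall a b c, meet a (meet b c) = meet (meet a b) c;
  join_meetK : forall a b, join a (meet a b) = a;
  meet_joinK : forall a b, meet a (join a b) = a;
  meet_joinDr : forall a b c, meet a (join b c) = join (meet a b) (meet a c);
  join_bot : forall a, join a bot = a;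
  meet_top : forall a, meet a top = a;
  sub_spec : forall a b c, meet a (join b c) = a <-> meet (sub a b) c = sub a b
}.

Arguments bot {_}.
Arguments top {_}.
Arguments join {_} _ _.
Arguments meet {_} _ _.
Arguments sub {_} _ _.

Section Defs.
Variable L : coHeyting.

Definition le (a b : L) : Prop := meet a b = a.

Definition sdiff (a b : L) : L := join (sub a b) (sub b a).

Definition is_prime_filter (p : L -> Prop) : Prop :=
  p (@top L) /\ ~ p (@bot L) /\
  (forall a b, p a -> le a b -> p b) /\
  (forall a b, p a -> p b -> p (meet a b)) /\
  (forall a b, p (join a b) -> p a \/ p b).

Definition strict_incl (q p : L -> Prop) : Prop :=
  (forall x, q x -> p x) /\ exists x, p x /\ ~ q x.

(** height_ge p d : the foundation rank of p in Spec L is >= d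
    (for finite d this is equivalent to the existence of a strict chain
    q_0 < q_1 < ... < q_d = p of prime filters; points of infinite rank,
    including those with non-well-founded down-set, satisfy it for all d). *)
Fixpoint height_ge (p : L -> Prop) (d : nat) : Prop :=
  match d with
  | O => True
  | S n => exists q, is_prime_filter q /\ strict_incl q p /\ height_ge q n
  end.

(** codim_L a >= d  (the min over an empty set being +oo) *)
Definition codim_ge (a : L) (d : nat) : Prop :=
  forall p, is_prime_filter p -> p a -> height_ge p d.

Definition codim_finite (a : L) : Prop := exists d, ~ codim_ge a d.

Definition hausdorff : Prop := forall a : L, a <> @bot L -> codim_finite a.

(** dL = {a | codim a >= d}; L/dL is finite: finitely many classes
    for a ==_I b <-> a △ b \in I *)
Definition quotient_finite (I : L -> Prop) : Prop :=
  exists xs : list L, forall a, exists x, List.In x xs /\ I (sdiff a x).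

Definition precompact : Prop :=
  forall d, 0 < d -> quotient_finite (fun a => codim_ge a d).

Definition is_sup (A : L -> Prop) (s : L) : Prop :=
  (forall a, A a -> le a s) /\ (forall u, (forall a, A a -> le a u) -> le s u).
Definition is_inf (A : L -> Prop) (s : L) : Prop :=
  (forall a, A a -> le s a) /\ (forall u, (forall a, A a -> le u a) -> le u s).

Definition completely_join_irreducible (x : L) : Prop :=
  x <> @bot L /\
  forall (A : L -> Prop) s, is_sup A s -> le x s -> exists a, A a /\ le x a.

Definition completely_meet_irreducible (x : L) : Prop :=
  x <> @top L /\
  forall (A : L -> Prop) s, is_inf A s -> le s x -> exists a, A a /\ le a x.

Definition is_subalgebra (S : L -> Prop) : Prop :=
  S (@bot L) /\ S (@top L) /\
  (forall a b, S a -> S b -> S (join a b)) /\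
  (forall a b, S a -> S b -> S (meet a b)) /\
  (forall a b, S a -> S b -> S (sub a b)).

Inductive generated (X : L -> Prop) : L -> Prop :=
  | gen_base : forall x, X x -> generated X x
  | gen_bot : generated X (@bot L)
  | gen_top : generated X (@top L)
  | gen_join : forall a b, generated X a -> generated X b -> generated X (join a b)
  | gen_meet : forall a b, generated X a -> generated X b -> generated X (meet a b)
  | gen_sub : forall a b, generated X a -> generated X b -> generated X (sub a b).

(** S is dense for the codimetric topology: every open ball
    {b | dist(a,b) < eps} meets S; since dist(a,b) < 2^-d iff
    codim(a △ b) >= d+1 (or is infinite), this is: *)
Definition codim_dense (S : L -> Prop) : Prop :=
  forall (a : L) (d : nat), exists s, S s /\ codim_ge (sdiff a s) d.

End Defs.

(** A prime filter [xi] of finite height [N] is principal, generated by a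
    completely join irreducible [x], and its complement is principal,
    generated by a completely meet irreducible [c]: precompactness gives
    approximations of [inf xi] and [sup (L \ xi)] up to codimension [N],
    primes of height [< N] cannot tell such approximations from the truth,
    and Hausdorffness supplies enough primes of finite height.  These
    generators make the subalgebras generated by either kind of irreducible
    dense: were [a - s] in a prime of height [< d], for [s <= a] the best
    approximation of [a] from below, the generator of a smaller prime
    avoiding [s] would improve on [s].  Conversely every completely join
    (meet) irreducible element is such a generator, and such generators lie
    in every dense subalgebra, e.g. [x = s - c] for [s] close to [x]. *)

From Stdlib Require Import List Classical Lia.
From mathcomp Require classical_sets.
Set Implicit Arguments.
Unset Strict Implicit.

Arguments le {L}. Arguments sdiff {L}. Arguments codim_ge {L}. Arguments height_ge {L}.
Arguments is_prime_filter {L}. Arguments strict_incl {L}. Arguments quotient_finite {L}.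
Arguments codim_dense {L}. Arguments is_subalgebra {L}. Arguments generated {L}.
Arguments completely_join_irreducible {L}. Arguments completely_meet_irreducible {L}.
Arguments joinC {_}. Arguments joinA {_}. Arguments meetC {_}. Arguments meetA {_}.
Arguments join_meetK {_}. Arguments meet_joinK {_}. Arguments meet_joinDr {_}.
Arguments join_bot {_}. Arguments meet_top {_}. Arguments sub_spec {_}.

Section CoHeytingAlgebra.
Variable L : coHeyting.
Implicit Types (a b c s u v w x y z : L) (p q xi : L -> Prop).

Lemma meet_idem a : meet a a = a.
Proof. rewrite <- (join_meetK a a) at 2. apply meet_joinK. Qed.

Lemma le_refl a : le a a.
Proof. apply meet_idem. Qed.

Lemma le_trans a b c : le a b -> le b c -> le a c.
Proof.
  unfold le; intros Hab Hbc. transitivity (meet (meet a b) c).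
  - rewrite Hab; reflexivity.
  - rewrite <- meetA, Hbc; exact Hab.
Qed.

Lemma le_antisym a b : le a b -> le b a -> a = b.
Proof. unfold le; intros Hab Hba. rewrite <- Hab, meetC. exact Hba. Qed.

Lemma le_join_iff a b : le a b <-> join a b = b.
Proof.
  unfold le; split; intro H.
  - rewrite <- H, joinC, meetC. apply join_meetK.
  - rewrite <- H. apply meet_joinK.
Qed.

Lemma le_joinl a b : le a (join a b).
Proof. apply meet_joinK. Qed.

Lemma le_joinr a b : le b (join a b).
Proof. rewrite joinC; apply le_joinl. Qed.

Lemma join_lub a b c : le a c -> le b c -> le (join a b) c.
Proof.
  intros Hac Hbc. apply le_join_iff. rewrite <- joinA.
  rewrite (proj1 (le_join_iff b c) Hbc). apply le_join_iff, Hac.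
Qed.

Lemma le_meetl a b : le (meet a b) a.
Proof. unfold le; rewrite meetC, meetA, meet_idem; reflexivity. Qed.

Lemma le_meetr a b : le (meet a b) b.
Proof. rewrite meetC; apply le_meetl. Qed.

Lemma meet_glb a b c : le c a -> le c b -> le c (meet a b).
Proof. unfold le; intros Hca Hcb; rewrite meetA, Hca, Hcb; reflexivity. Qed.

Lemma le_bot a : le bot a.
Proof. apply le_join_iff; rewrite joinC; apply join_bot. Qed.

Lemma le_top a : le a top.
Proof. apply meet_top. Qed.

Lemma join_mono a a' b b' : le a a' -> le b b' -> le (join a b) (join a' b').
Proof.
  intros; apply join_lub.
  - eapply le_trans; [eassumption | apply le_joinl].
  - eapply le_trans; [eassumption | apply le_joinr].
Qed.

Lemma meet_mono a a' b b' : le a a' -> le b b' -> le (meet a b) (meet a' b').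
Proof.
  intros; apply meet_glb.
  - eapply le_trans; [apply le_meetl | eassumption].
  - eapply le_trans; [apply le_meetr | eassumption].
Qed.

Lemma sub_le_iff a b c : le (sub a b) c <-> le a (join b c).
Proof. unfold le; split; intro H; apply sub_spec; exact H. Qed.

Lemma le_join_sub a b : le a (join b (sub a b)).
Proof. apply sub_le_iff, le_refl. Qed.

Lemma le_sub_l a b : le (sub a b) a.
Proof. apply sub_le_iff, le_joinr. Qed.

Lemma sub_monol a a' b : le a a' -> le (sub a b) (sub a' b).
Proof. intro H; apply sub_le_iff. eapply le_trans; [exact H | apply le_join_sub]. Qed.

Lemma sub_antir a b b' : le b b' -> le (sub a b') (sub a b).
Proof.
  intro H; apply sub_le_iff. eapply le_trans; [apply (le_join_sub a b) |].
  apply join_mono; [exact H | apply le_refl].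
Qed.

Lemma sub_le_swap a b c : le (sub a b) c -> le (sub a c) b.
Proof.
  intro H; apply sub_le_iff; apply sub_le_iff in H.
  eapply le_trans; [exact H |]. apply join_lub; [apply le_joinr | apply le_joinl].
Qed.

Lemma sub_eq_bot a b : le a b -> sub a b = bot.
Proof.
  intro H. apply le_antisym; [| apply le_bot]. apply sub_le_iff. rewrite join_bot. exact H.
Qed.

Lemma sub_bot_le a b : sub a b = bot -> le a b.
Proof. intro H. rewrite <- (join_bot b). apply sub_le_iff. rewrite H. apply le_refl. Qed.

Lemma sub_subK a b : sub (sub a b) b = sub a b.
Proof.
  apply le_antisym; [apply le_sub_l |].
  apply sub_le_iff. eapply le_trans; [apply (le_join_sub a b) |].
  apply join_lub; [apply le_joinl | apply le_join_sub].
Qed.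

Lemma sub_triangle a b c : le (sub a c) (join (sub a b) (sub b c)).
Proof.
  apply sub_le_iff. eapply le_trans; [apply (le_join_sub a b) |]. apply join_lub.
  - eapply le_trans; [apply (le_join_sub b c) |].
    rewrite (joinC (sub a b)), joinA. apply le_joinl.
  - eapply le_trans; [| apply le_joinr]. apply le_joinl.
Qed.

Lemma sdiff_same a : sdiff a a = bot.
Proof. unfold sdiff. rewrite (sub_eq_bot (le_refl a)). apply join_bot. Qed.

Lemma sdiff_le a b : le b a -> sdiff a b = sub a b.
Proof. intro H. unfold sdiff. rewrite (sub_eq_bot H). apply join_bot. Qed.

Lemma sdiff_ge a b : le a b -> sdiff a b = sub b a.
Proof. intro H. unfold sdiff. rewrite (sub_eq_bot H), joinC. apply join_bot. Qed.

Lemma pf_top p : is_prime_filter p -> p top.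
Proof. intros Hp; apply Hp. Qed.

Lemma pf_bot p : is_prime_filter p -> ~ p bot.
Proof. intros Hp; apply Hp. Qed.

Lemma pf_up p a b : is_prime_filter p -> p a -> le a b -> p b.
Proof. intros Hp; apply Hp. Qed.

Lemma pf_meet p a b : is_prime_filter p -> p a -> p b -> p (meet a b).
Proof. intros Hp; apply Hp. Qed.

Lemma pf_prime p a b : is_prime_filter p -> p (join a b) -> p a \/ p b.
Proof. intros Hp; apply Hp. Qed.

Lemma pf_split p a b : is_prime_filter p -> p a -> p b \/ p (sub a b).
Proof. intros Hp Ha. apply (pf_prime Hp). apply (pf_up Hp Ha), le_join_sub. Qed.

Lemma height_ge_pred p d : height_ge p (S d) -> height_ge p d.
Proof.
  revert p; induction d as [| d IH]; intros p H; simpl; [exact I |].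
  destruct H as [q [Hq [Hqp Hh]]]. exists q; auto.
Qed.

Lemma height_ge_incl p q d : (forall x, q x -> p x) -> height_ge q d -> height_ge p d.
Proof.
  destruct d as [| d]; intros Hqp H; simpl; [exact I |].
  destruct H as [r [Hr [[Hrq [x [Hqx Hrx]]] Hh]]].
  exists r; split; [exact Hr | split; [split; [auto | exists x; auto] | exact Hh]].
Qed.

Lemma codim_ge_le a b d : le a b -> codim_ge b d -> codim_ge a d.
Proof. intros Hab Hb p Hp Ha. apply Hb; [exact Hp | exact (pf_up Hp Ha Hab)]. Qed.

Lemma codim_ge_join a b d : codim_ge a d -> codim_ge b d -> codim_ge (join a b) d.
Proof. intros Ha Hb p Hp Hab. destruct (pf_prime Hp Hab); auto. Qed.

Lemma codim_ge_0 a : codim_ge a 0.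
Proof. intros p _ _; exact I. Qed.

Lemma codim_ge_bot d : codim_ge (@bot L) d.
Proof. intros p Hp H. contradiction (pf_bot Hp H). Qed.

Lemma codim_ge_sdiff_l a b d : codim_ge (sdiff a b) d -> codim_ge (sub a b) d.
Proof. apply codim_ge_le, le_joinl. Qed.

Lemma codim_ge_sdiff_r a b d : codim_ge (sdiff a b) d -> codim_ge (sub b a) d.
Proof. apply codim_ge_le, le_joinr. Qed.

(* The metric meaning of codimension: primes of height [< d] cannot separate
   elements at distance [< 2^-d]. *)
Lemma low_prime_transfer p a b d :
  is_prime_filter p -> ~ height_ge p d -> codim_ge (sub a b) d -> p a -> p b.
Proof.
  intros Hp Hh Hc Ha. destruct (pf_split b Hp Ha) as [Hb | Hab]; [exact Hb |].
  contradiction (Hh (Hc p Hp Hab)).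
Qed.

Lemma not_codim_ge_low_prime a d : ~ codim_ge a d ->
  exists p, is_prime_filter p /\ p a /\ ~ height_ge p d.
Proof.
  intro H. apply NNPP; intro Hno. apply H; intros p Hp Ha.
  apply NNPP; intro Hh. apply Hno; eauto.
Qed.

Definition included p q := forall x, p x -> q x.

Definition up_closed p := forall a b, p a -> le a b -> p b.
Definition meet_closed p := forall a b, p a -> p b -> p (meet a b).

Definition filter_adjoin p c : L -> Prop := fun z => exists g, p g /\ le (meet g c) z.

Lemma filter_adjoin_spec p c : up_closed p -> meet_closed p -> p top ->
  up_closed (filter_adjoin p c) /\ meet_closed (filter_adjoin p c) /\
  included p (filter_adjoin p c) /\ filter_adjoin p c c.
Proof.
  intros Pup Pmeet Ptop. repeat split.
  - intros x y [g [Pg Hg]] Hxy. exists g; split; [exact Pg | eapply le_trans; eauto].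
  - intros x y [g1 [Pg1 H1]] [g2 [Pg2 H2]]. exists (meet g1 g2); split; [auto |].
    apply meet_glb.
    + eapply le_trans; [| exact H1]. apply meet_mono; [apply le_meetl | apply le_refl].
    + eapply le_trans; [| exact H2]. apply meet_mono; [apply le_meetr | apply le_refl].
  - intros x Px. exists x; split; [exact Px | apply le_meetl].
  - exists top; split; [exact Ptop | rewrite meetC, meet_top; apply le_refl].
Qed.

(* The last clause, rather than [p a], lets the empty set (the union of the
   empty chain) qualify. *)
Definition filter_avoiding a (J : L -> Prop) p :=
  up_closed p /\ meet_closed p /\ (forall z, p z -> ~ J z) /\ (forall z, p z -> p a).

Lemma filter_avoiding_chain_union a J (C : (L -> Prop) -> Prop) :
  (forall p, C p -> filter_avoiding a J p) ->
  (forall p q, C p -> C q -> included p q \/ included q p) ->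
  filter_avoiding a J (fun z => exists2 p, C p & p z).
Proof.
  intros HC Htot. repeat split.
  - intros u v [p Cp pu] Huv. exists p; [exact Cp | exact (proj1 (HC p Cp) u v pu Huv)].
  - intros u v [p Cp pu] [q Cq qv].
    destruct (Htot p q Cp Cq) as [H | H].
    + exists q; [exact Cq | apply (HC q Cq); auto].
    + exists p; [exact Cp | apply (HC p Cp); auto].
  - intros u [p Cp pu]. exact (proj1 (proj2 (proj2 (HC p Cp))) u pu).
  - intros u [p Cp pu]. exists p; [exact Cp | exact (proj2 (proj2 (proj2 (HC p Cp))) u pu)].
Qed.

Lemma prime_filter_theorem a (J : L -> Prop) :
  J bot -> (forall u v, J u -> le v u -> J v) -> (forall u v, J u -> J v -> J (join u v)) ->
  ~ J a -> exists Q, is_prime_filter Q /\ Q a /\ forall z, Q z -> ~ J z.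
Proof.
  intros Jbot Jdown Jjoin Ja.
  destruct (@classical_sets.Zorn_bigcup L (filter_avoiding a J)) as [A [[Aup [Ameet [AJ Aa]]] Amax]].
  { intros C HC Htot. exact (filter_avoiding_chain_union HC Htot). }
  assert (HAa : A a).
  { apply NNPP; intro Na. apply (Amax (le a)).
    - split; [intros z Az; contradiction (Na (Aa z Az)) |].
      intro H. exact (Na (H a (le_refl a))).
    - repeat split.
      + intros u v Hu Huv; eapply le_trans; eauto.
      + intros u v; apply meet_glb.
      + intros z Hz Jz. exact (Ja (Jdown z a Jz Hz)).
      + intros; apply le_refl. }
  assert (Atop : A top) by exact (Aup a top HAa (le_top a)).
  assert (Hext : forall c, ~ A c -> exists g z, A g /\ le (meet g c) z /\ J z).
  { intros c Nc. apply NNPP; intro Hn.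
    destruct (filter_adjoin_spec c Aup Ameet Atop) as [Bup [Bmeet [AB Bc]]].
    apply (Amax (filter_adjoin A c)).
    - split; [exact AB | intro H; exact (Nc (H c Bc))].
    - repeat split; auto.
      intros z [g [Ag Hg]] Jz. apply Hn; eauto. }
  exists A; repeat split; auto.
  - intro Abot. exact (AJ bot Abot Jbot).
  - intros b c Hbc. apply NNPP; intro Hn. apply not_or_and in Hn; destruct Hn as [Nb Nc].
    destruct (Hext b Nb) as [g1 [z1 [Ag1 [H1 J1]]]].
    destruct (Hext c Nc) as [g2 [z2 [Ag2 [H2 J2]]]].
    apply (AJ (meet (meet g1 g2) (join b c))); [apply Ameet; auto |].
    apply Jdown with (join z1 z2); [apply Jjoin; auto |].
    rewrite meet_joinDr. apply join_mono.
    + eapply le_trans; [| exact H1]. apply meet_mono; [apply le_meetl | apply le_refl].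
    + eapply le_trans; [| exact H2]. apply meet_mono; [apply le_meetr | apply le_refl].
Qed.

Lemma prime_below_avoiding g a c : is_prime_filter g -> g (sub a c) ->
  exists g', is_prime_filter g' /\ included g' g /\ g' (sub a c) /\ ~ g' c.
Proof.
  intros Hg Hac.
  destruct (@prime_filter_theorem (sub a c) (fun z => exists u, ~ g u /\ le z (join u c)))
    as [Q [HQ [Qac QJ]]].
  - exists bot; split; [exact (pf_bot Hg) | apply le_bot].
  - intros x y [u [Hu Hx]] Hyx. exists u; split; [exact Hu | eapply le_trans; eauto].
  - intros x y [u [Hu Hx]] [v [Hv Hy]]. exists (join u v); split.
    + intro H; destruct (pf_prime Hg H); auto.
    + apply join_lub.
      * eapply le_trans; [exact Hx |]. apply join_mono; [apply le_joinl | apply le_refl].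
      * eapply le_trans; [exact Hy |]. apply join_mono; [apply le_joinr | apply le_refl].
  - intros [u [Hu Hle]]. apply Hu, (pf_up Hg Hac).
    rewrite <- sub_subK. apply sub_le_iff. rewrite joinC. exact Hle.
  - exists Q; split; [exact HQ | split; [| split; [exact Qac |]]].
    + intros x Qx. apply NNPP; intro Nx. apply (QJ x Qx). exists x; split; [exact Nx | apply le_joinl].
    + intro Qc. apply (QJ c Qc). exists bot; split; [exact (pf_bot Hg) | apply le_joinr].
Qed.

Lemma hausdorff_low_prime b : hausdorff L -> b <> bot ->
  exists p d, is_prime_filter p /\ p b /\ ~ height_ge p d.
Proof.
  intros Hh Hb. destruct (Hh b Hb) as [d Hd].
  destruct (not_codim_ge_low_prime Hd) as [p Hp]. exists p, d; exact Hp.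
Qed.

Lemma hausdorff_low_prime_avoiding y c : hausdorff L -> ~ le y c ->
  exists p d, is_prime_filter p /\ p (sub y c) /\ ~ p c /\ ~ height_ge p d.
Proof.
  intros Hh Hyc.
  assert (Hb : sub y c <> bot) by (intro H; exact (Hyc (sub_bot_le H))).
  destruct (hausdorff_low_prime Hh Hb) as [p [d [Hp [Hpb Hph]]]].
  destruct (prime_below_avoiding Hp Hpb) as [g [Hg [Hgp [Hgb Hgc]]]].
  exists g, d; split; [exact Hg | split; [exact Hgb | split; [exact Hgc |]]].
  intro H; exact (Hph (height_ge_incl Hgp H)).
Qed.

(* A single element is picked in each of the finitely many classes of [L/dL]
   that meet [U], and their join is taken. *)
Lemma approx_sup_of_join_closed d (U : L -> Prop) :
  quotient_finite (fun a => codim_ge a d) -> U bot -> (forall a b, U a -> U b -> U (join a b)) ->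
  exists c, U c /\ forall z, U z -> codim_ge (sub z c) d.
Proof.
  intros [xs Hxs] Ubot Ujoin.
  assert (H : forall l, exists c, U c /\ forall r, In r l -> forall z, U z ->
             codim_ge (sdiff z r) d -> codim_ge (sub z c) d).
  { induction l as [| r l [c0 [Uc0 Hc0]]]; [exists bot; split; [exact Ubot | intros r []] |].
    destruct (classic (exists z0, U z0 /\ codim_ge (sdiff z0 r) d)) as [[z0 [Uz0 Hz0]] | Hno].
    - exists (join c0 z0); split; [auto |].
      intros r' [<- | Hr'] z Uz Hz.
      + eapply codim_ge_le; [apply sub_antir, le_joinr |].
        eapply codim_ge_le; [apply (sub_triangle z r z0) |].
        apply codim_ge_join; [apply codim_ge_sdiff_l | apply codim_ge_sdiff_r]; auto.
      + eapply codim_ge_le; [apply sub_antir, le_joinl | eauto].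
    - exists c0; split; [exact Uc0 |].
      intros r' [<- | Hr'] z Uz Hz; [contradiction Hno; eauto | eauto]. }
  destruct (H xs) as [c [Uc Hc]]. exists c; split; [exact Uc |].
  intros z Uz. destruct (Hxs z) as [r [Hr Hzr]]. eauto.
Qed.

Lemma approx_inf_of_meet_closed d (U : L -> Prop) :
  quotient_finite (fun a => codim_ge a d) -> U top -> (forall a b, U a -> U b -> U (meet a b)) ->
  exists c, U c /\ forall z, U z -> codim_ge (sub c z) d.
Proof.
  intros [xs Hxs] Utop Umeet.
  assert (H : forall l, exists c, U c /\ forall r, In r l -> forall z, U z ->
             codim_ge (sdiff z r) d -> codim_ge (sub c z) d).
  { induction l as [| r l [c0 [Uc0 Hc0]]]; [exists top; split; [exact Utop | intros r []] |].
    destruct (classic (exists z0, U z0 /\ codim_ge (sdiff z0 r) d)) as [[z0 [Uz0 Hz0]] | Hno].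
    - exists (meet c0 z0); split; [auto |].
      intros r' [<- | Hr'] z Uz Hz.
      + eapply codim_ge_le; [apply sub_monol, le_meetr |].
        eapply codim_ge_le; [apply (sub_triangle z0 r z) |].
        apply codim_ge_join; [apply codim_ge_sdiff_l | apply codim_ge_sdiff_r]; auto.
      + eapply codim_ge_le; [apply sub_monol, le_meetl | eauto].
    - exists c0; split; [exact Uc0 |].
      intros r' [<- | Hr'] z Uz Hz; [contradiction Hno; eauto | eauto]. }
  destruct (H xs) as [c [Uc Hc]]. exists c; split; [exact Uc |].
  intros z Uz. destruct (Hxs z) as [r [Hr Hzr]]. eauto.
Qed.

Lemma exists_minimal_prime_not_included xi m g :
  is_prime_filter g -> ~ height_ge g m -> ~ included g xi ->
  exists r, is_prime_filter r /\ included r g /\ ~ included r xi /\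
    forall q, is_prime_filter q -> strict_incl q r -> included q xi.
Proof.
  revert g; induction m as [| k IH]; intros g Hg Hh Hn; [contradiction (Hh I) |].
  destruct (classic (exists q, is_prime_filter q /\ strict_incl q g /\ ~ included q xi))
    as [[q [Hq [Hqg Hqn]]] | Hno].
  - assert (Hqh : ~ height_ge q k) by (intro H; apply Hh; exists q; auto).
    destruct (IH q Hq Hqh Hqn) as [r [Hr [Hrq [Hrn Hrm]]]].
    exists r; split; [exact Hr | split; [| split; [exact Hrn | exact Hrm]]].
    intros x Hx; apply Hqg, Hrq, Hx.
  - exists g; split; [exact Hg | split; [intros x Hx; exact Hx | split; [exact Hn |]]].
    intros q Hq Hqg. apply NNPP; intro Hn'. apply Hno; eauto.
Qed.

Lemma height_lt_of_minimal xi r N : ~ height_ge xi N ->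
  (forall q, is_prime_filter q -> strict_incl q r -> included q xi) -> ~ height_ge r (S N).
Proof.
  intros Hxi Hr [q [Hq [Hqr Hh]]]. exact (Hxi (height_ge_incl (Hr q Hq Hqr) Hh)).
Qed.

Definition max_outside xi c := ~ xi c /\ forall y, ~ xi y -> le y c.
Definition min_inside xi x := xi x /\ forall y, xi y -> le x y.

Lemma max_outside_unique xi c c' : max_outside xi c -> max_outside xi c' -> c = c'.
Proof. intros [Nc Hc] [Nc' Hc']. apply le_antisym; auto. Qed.

Section DenseJoinClosed.
Variable A : L -> Prop.
Hypotheses (Abot : A bot) (Ajoin : forall a b, A a -> A b -> A (join a b)).
Hypothesis Adense : codim_dense A.

Lemma minimal_prime_contains_approx_sup xi N c r :
  is_prime_filter xi -> ~ height_ge xi N ->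
  (forall z, A z -> ~ xi z -> codim_ge (sub z c) (S N)) ->
  is_prime_filter r -> ~ included r xi ->
  (forall q, is_prime_filter q -> strict_incl q r -> included q xi) -> r c.
Proof.
  intros Hxi HN Hc Hr Hrn Hrm.
  pose proof (height_lt_of_minimal HN Hrm) as Hrh.
  assert (HxiS : ~ height_ge xi (S N)) by (intro H; exact (HN (height_ge_pred H))).
  apply not_all_ex_not in Hrn; destruct Hrn as [w Hw].
  apply imply_to_and in Hw; destruct Hw as [rw nxw].
  destruct (Adense w (S N)) as [z [Az Hz]].
  assert (rz : r z) by exact (low_prime_transfer Hr Hrh (codim_ge_sdiff_l Hz) rw).
  assert (nz : ~ xi z) by exact (fun xz => nxw (low_prime_transfer Hxi HxiS (codim_ge_sdiff_r Hz) xz)).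
  exact (low_prime_transfer Hr Hrh (Hc z Az nz) rz).
Qed.

Lemma exists_max_outside xi N : precompact L -> hausdorff L ->
  is_prime_filter xi -> ~ height_ge xi N -> exists c, A c /\ max_outside xi c.
Proof.
  intros Hpc Hh Hxi HN.
  destruct (@approx_sup_of_join_closed (S N) (fun z => A z /\ ~ xi z)) as [c [[Ac Nc] Hc]].
  - apply Hpc; lia.
  - split; [exact Abot | exact (pf_bot Hxi)].
  - intros a b [Aa Na] [Ab Nb]; split; [auto | intro H; destruct (pf_prime Hxi H); auto].
  - exists c; repeat split; auto.
    intros y Ny. apply NNPP; intro Hyc.
    destruct (hausdorff_low_prime_avoiding Hh Hyc) as [g [d [Hg [Hgb [Hgc Hgh]]]]].
    assert (Hgn : ~ included g xi) by (intro H; exact (Ny (pf_up Hxi (H _ Hgb) (le_sub_l y c)))).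
    destruct (exists_minimal_prime_not_included Hg Hgh Hgn) as [r [Hr [Hrg [Hrn Hrm]]]].
    apply Hgc, Hrg.
    apply (@minimal_prime_contains_approx_sup xi N); auto.
Qed.

Lemma max_outside_mem xi N c : precompact L -> hausdorff L ->
  is_prime_filter xi -> ~ height_ge xi N -> max_outside xi c -> A c.
Proof.
  intros Hpc Hh Hxi HN Hc.
  destruct (exists_max_outside Hpc Hh Hxi HN) as [c' [Ac' Hc']].
  rewrite (max_outside_unique Hc Hc'). exact Ac'.
Qed.

End DenseJoinClosed.

Lemma codim_dense_full : codim_dense (fun _ : L => True).
Proof. intros a d. exists a; split; [exact I |]. rewrite sdiff_same. apply codim_ge_bot. Qed.

Lemma low_prime_generators xi N : precompact L -> hausdorff L ->
  is_prime_filter xi -> ~ height_ge xi N ->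
  exists x c, min_inside xi x /\ max_outside xi c.
Proof.
  intros Hpc Hh Hxi HN.
  destruct N as [| N]; [contradiction (HN I) |].
  destruct (@approx_inf_of_meet_closed (S N) xi) as [s [xs Hs]].
  - apply Hpc; lia.
  - exact (pf_top Hxi).
  - intros a b; apply pf_meet, Hxi.
  - destruct (exists_max_outside I (fun _ _ _ _ => I) codim_dense_full Hpc Hh Hxi HN)
      as [c [_ [Nc Hc]]].
    exists (sub s c), c; repeat split; auto.
    + destruct (pf_split c Hxi xs); [contradiction | assumption].
    + intros b xb. apply sub_le_swap, Hc.
      intro H. exact (HN (Hs b xb xi Hxi H)).
Qed.

Lemma min_inside_cji xi x c : is_prime_filter xi ->
  min_inside xi x -> max_outside xi c -> completely_join_irreducible x.
Proof.
  intros Hxi [xx Hx] [Nc Hc]. split.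
  - intro H; subst; exact (pf_bot Hxi xx).
  - intros B t [Hub Hlub] Hxt. apply NNPP; intro Hno.
    assert (Htc : le t c).
    { apply Hlub. intros b Bb. apply Hc. intro xb. apply Hno; eauto. }
    exact (Nc (pf_up Hxi xx (le_trans Hxt Htc))).
Qed.

Lemma max_outside_cmi xi x c : is_prime_filter xi ->
  min_inside xi x -> max_outside xi c -> completely_meet_irreducible c.
Proof.
  intros Hxi [xx Hx] [Nc Hc]. split.
  - intro H; subst; exact (Nc (pf_top Hxi)).
  - intros B t [Hlb Hglb] Htc. apply NNPP; intro Hno.
    assert (Hxt : le x t).
    { apply Hglb. intros b Bb. apply Hx. apply NNPP; intro nb. apply Hno; eauto. }
    exact (Nc (pf_up Hxi xx (le_trans Hxt Htc))).
Qed.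

Lemma dense_of_min_inside (A : L -> Prop) : precompact L ->
  A bot -> (forall a b, A a -> A b -> A (join a b)) ->
  (forall xi N, is_prime_filter xi -> ~ height_ge xi N -> exists x, A x /\ min_inside xi x) ->
  codim_dense A.
Proof.
  intros Hpc Abot Ajoin Hx a d.
  destruct d as [| d]; [exists bot; split; [exact Abot | apply codim_ge_0] |].
  destruct (@approx_sup_of_join_closed (S d) (fun z => A z /\ le z a)) as [s [[As sa] Hs]].
  - apply Hpc; lia.
  - split; [exact Abot | apply le_bot].
  - intros u v [Au ua] [Av va]; split; [auto | apply join_lub; auto].
  - exists s; split; [exact As |]. rewrite sdiff_le by exact sa.
    intros p Hp Hps. apply NNPP; intro Hph.
    destruct (prime_below_avoiding Hp Hps) as [g [Hg [Hgp [Hgb Hgs]]]].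
    assert (Hgh : ~ height_ge g (S d)) by (intro H; exact (Hph (height_ge_incl Hgp H))).
    destruct (Hx g (S d) Hg Hgh) as [x [Ax [gx Hxg]]].
    assert (xa : le x a) by exact (le_trans (Hxg _ Hgb) (le_sub_l a s)).
    exact (Hgs (low_prime_transfer Hg Hgh (Hs x (conj Ax xa)) gx)).
Qed.

Lemma dense_of_max_outside (A : L -> Prop) : precompact L ->
  A top -> (forall a b, A a -> A b -> A (meet a b)) ->
  (forall xi N, is_prime_filter xi -> ~ height_ge xi N -> exists c, A c /\ max_outside xi c) ->
  codim_dense A.
Proof.
  intros Hpc Atop Ameet Hk a d.
  destruct d as [| d]; [exists top; split; [exact Atop | apply codim_ge_0] |].
  destruct (@approx_inf_of_meet_closed (S d) (fun z => A z /\ le a z)) as [s [[As sa] Hs]].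
  - apply Hpc; lia.
  - split; [exact Atop | apply le_top].
  - intros u v [Au ua] [Av va]; split; [auto | apply meet_glb; auto].
  - exists s; split; [exact As |]. rewrite sdiff_ge by exact sa.
    intros p Hp Hps. apply NNPP; intro Hph.
    destruct (prime_below_avoiding Hp Hps) as [g [Hg [Hgp [Hgb Hga]]]].
    assert (Hgh : ~ height_ge g (S d)) by (intro H; exact (Hph (height_ge_incl Hgp H))).
    destruct (Hk g (S d) Hg Hgh) as [c [Ac [Nc Hc]]].
    assert (gs : g s) by exact (pf_up Hg Hgb (le_sub_l s a)).
    apply Nc, (pf_up (a := meet s c) Hg); [| apply le_meetr].
    apply (low_prime_transfer Hg Hgh (Hs _ (conj (Ameet _ _ As Ac) (meet_glb sa (Hc a Hga)))) gs).
Qed.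

Lemma cji_join_prime x a b : completely_join_irreducible x ->
  le x (join a b) -> le x a \/ le x b.
Proof.
  intros [_ Hx] Hab.
  destruct (Hx (fun z => z = a \/ z = b) (join a b)) as [z [[-> | ->] Hz]]; auto.
  split.
  - intros z [-> | ->]; [apply le_joinl | apply le_joinr].
  - intros u Hu. apply join_lub; apply Hu; auto.
Qed.

Lemma cji_principal_prime x : completely_join_irreducible x -> is_prime_filter (le x).
Proof.
  intros Hx. repeat split.
  - apply le_top.
  - intro H. apply (proj1 Hx), le_antisym; [exact H | apply le_bot].
  - intros; eapply le_trans; eauto.
  - intros; apply meet_glb; auto.
  - intros a b; apply cji_join_prime, Hx.
Qed.

Section DenseSubalgebra.
Variable A : L -> Prop.
Hypotheses (Hpc : precompact L) (Hh : hausdorff L).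
Hypotheses (Asub : is_subalgebra A) (Adense : codim_dense A).

Lemma min_inside_mem xi N x : is_prime_filter xi -> ~ height_ge xi N -> min_inside xi x -> A x.
Proof.
  destruct Asub as [Abot [_ [Ajoin [_ Asubd]]]].
  intros Hxi HN [xx Hx].
  destruct (exists_max_outside Abot Ajoin Adense Hpc Hh Hxi HN) as [c [Ac [Nc Hc]]].
  destruct (Adense x N) as [s [As Hs]].
  assert (xs : le x s) by exact (Hx s (low_prime_transfer Hxi HN (codim_ge_sdiff_l Hs) xx)).
  assert (sxc : le (sub s x) c).
  { apply Hc. intro H. exact (HN (codim_ge_sdiff_r Hs Hxi H)). }
  replace x with (sub s c); [apply Asubd; auto |].
  apply le_antisym; [exact (sub_le_swap sxc) |].
  destruct (pf_split c Hxi xx) as [H | H]; [contradiction |].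
  exact (le_trans (Hx _ H) (sub_monol c xs)).
Qed.

Lemma cji_mem x : completely_join_irreducible x -> A x.
Proof.
  intros Hx.
  destruct (hausdorff_low_prime Hh (proj1 Hx)) as [p [N [Hp [Hpx HpN]]]].
  apply (@min_inside_mem (le x) N); [exact (cji_principal_prime Hx) | |].
  - intro H; apply HpN. eapply height_ge_incl; [| exact H]. intros z Hz. exact (pf_up Hp Hpx Hz).
  - split; [apply le_refl | intros y Hy; exact Hy].
Qed.

(* [c] is the infimum of the generators of the complements of the
   finite-height primes avoiding it. *)
Lemma cmi_mem c : completely_meet_irreducible c -> A c.
Proof.
  destruct Asub as [Abot [_ [Ajoin _]]].
  intros [cnt Hc].
  pose (B := fun z => exists r N, is_prime_filter r /\ ~ height_ge r N /\ ~ r c /\ max_outside r z).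
  destruct (Hc B c) as [z [[r [N [Hr [HN [Nrc Hrz]]]]] zc]]; [split | apply le_refl |].
  - intros z [r [N [Hr [HN [Nrc [_ Hrz]]]]]]. exact (Hrz c Nrc).
  - intros u Hu. apply NNPP; intro Huc.
    destruct (hausdorff_low_prime_avoiding Hh Huc) as [g [d [Hg [Hgb [Hgc Hgh]]]]].
    destruct (exists_max_outside I (fun _ _ _ _ => I) codim_dense_full Hpc Hh Hg Hgh)
      as [k [_ Hk]].
    assert (uk : le u k) by (apply Hu; exists g, d; auto).
    exact (proj1 Hk (pf_up Hg (pf_up Hg Hgb (le_sub_l u c)) uk)).
  - replace c with z; [exact (max_outside_mem Abot Ajoin Adense Hpc Hh Hr HN Hrz) |].
    apply le_antisym; [exact zc | exact (proj2 Hrz c Nrc)].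
Qed.

End DenseSubalgebra.

Lemma generated_is_subalgebra (X : L -> Prop) : is_subalgebra (generated X).
Proof.
  split; [apply gen_bot | split; [apply gen_top | split; [| split]]];
    intros; [apply gen_join | apply gen_meet | apply gen_sub]; assumption.
Qed.

Lemma generated_least (X A : L -> Prop) :
  is_subalgebra A -> included X A -> included (generated X) A.
Proof.
  intros [Abot [Atop [Ajoin [Ameet Asub]]]] HX x Hx.
  induction Hx; auto.
Qed.

End CoHeytingAlgebra.

Theorem proposition6p12 (L : coHeyting) :
  precompact L -> hausdorff L ->
  (forall x : L, @generated L (@completely_join_irreducible L) x <->
                 @generated L (@completely_meet_irreducible L) x) /\
  @is_subalgebra L (@generated L (@completely_join_irreducible L)) /\
  @codim_dense L (@generated L (@completely_join_irreducible L)) /\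
  (forall S : L -> Prop, @is_subalgebra L S -> @codim_dense L S ->
     forall x : L, @generated L (@completely_join_irreducible L) x -> S x).
Proof.
  intros Hpc Hh.
  set (GJ := generated (@completely_join_irreducible L)).
  set (GM := generated (@completely_meet_irreducible L)).
  assert (GJdense : codim_dense GJ).
  { apply dense_of_min_inside; [exact Hpc | apply gen_bot | intros; apply gen_join; auto |].
    intros xi N Hxi HN. destruct (low_prime_generators Hpc Hh Hxi HN) as [x [c [Hx Hc]]].
    exists x; split; [apply gen_base; exact (min_inside_cji Hxi Hx Hc) | exact Hx]. }
  assert (GMdense : codim_dense GM).
  { apply dense_of_max_outside; [exact Hpc | apply gen_top | intros; apply gen_meet; auto |].
    intros xi N Hxi HN. destruct (low_prime_generators Hpc Hh Hxi HN) as [x [c [Hx Hc]]].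
    exists c; split; [apply gen_base; exact (max_outside_cmi Hxi Hx Hc) | exact Hc]. }
  assert (GJleast : forall A, is_subalgebra A -> codim_dense A -> included GJ A).
  { intros A HA HAd. apply generated_least; [exact HA |]. exact (cji_mem Hpc Hh HA HAd). }
  split; [split | split; [apply generated_is_subalgebra | split; [exact GJdense | exact GJleast]]].
  - apply GJleast; [apply generated_is_subalgebra | exact GMdense].
  - apply generated_least; [apply generated_is_subalgebra |].
    exact (cmi_mem Hpc Hh (generated_is_subalgebra _) GJdense).
Qed.
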